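(* Let $G=(V,E)$ be a finite simple undirected connected graph. There exists a real constant $c>0$ such that for every nonempty proper subset $S\subset V$, \[ h^{\swarrow}(S)\;\le\;\frac{1}{|V\setminus S|}\Big(\sum_{u\in V\setminus S} d(u,S)\Big)\Big(\sum_{v\in V\setminus S} d(v)\Big)\;\le\; c\,|V\setminus S|^3 . \]
   Context: $d(v)$ is the degree of $v$, $d(u,v)$ the shortest-path distance and $d(u,S)=\min_{v\in S}d(u,v)$. A (simple) random walk moves from the current vertex $u$ to a uniformly random neighbor (probability $1/d(u)$); $H(u,S)$ is the expected number of steps for the walk started at $u$ to first reach a vertex of $S$, and $h^{\swarrow}(S)=\frac{\sum_{u\in V\setminus S}H(u,S)}{|V\setminus S|}$. *)

From HB Require Import structures.
From mathcomp Require Import all_boot all_order all_algebra.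
From mathcomp Require Import all_classical all_reals all_analysis.
Set Implicit Arguments. Unset Strict Implicit. Unset Printing Implicit Defensive.
Import Order.TTheory GRing.Theory Num.Theory.
Local Open Scope ring_scope.

Definition simple_graph (T : finType) (e : rel T) : Prop :=
  symmetric e /\ irreflexive e.

Definition connected_graph (T : finType) (e : rel T) : Prop :=
  forall x y : T, connect e x y.

Definition deg (T : finType) (e : rel T) (v : T) : nat := #|[set w | e v w]|.

Fixpoint walkb (T : finType) (e : rel T) (n : nat) (u v : T) : bool :=
  if n is n'.+1 then [exists y, e u y && walkb e n' y v] else u == v.

(* shortest-path distance d(u,v): least n with a walk of length n
   (for connected graphs it is < #|T|; searched in 0..#|T|-1) *)
Definition gdist (T : finType) (e : rel T) (u v : T) : nat :=
  find (fun n => walkb e n u v) (iota 0 #|T|).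

Definition gdist_set (T : finType) (e : rel T) (u : T) (S : {set T}) : nat :=
  \big[minn/#|T|]_(v in S) gdist e u v.

(* hitP R e S t x : probability that the simple random walk started at x
   first reaches S exactly at step t. *)
Fixpoint hitP (R : realType) (T : finType) (e : rel T) (S : {set T})
    (t : nat) (x : T) : R :=
  match t with
  | 0 => if x \in S then 1 else 0
  | t'.+1 => if x \in S then 0
             else \sum_(y in [set w | e x w]) (hitP R e S t' y) / (deg e x)%:R
  end.

Definition hitting_time (R : realType) (T : finType) (e : rel T)
    (u : T) (S : {set T}) : \bar R :=
  (\sum_(0 <= t <oo) ((t%:R * hitP R e S t u)%:E))%E.

Definition avg_hitting_time (R : realType) (T : finType) (e : rel T)
    (S : {set T}) : \bar R :=
  ((\sum_(u in ~: S) hitting_time R e u S) * ((#|~: S|%:R)^-1)%:E)%E.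

(* Let h vanish on S and satisfy L h = deg off S, where L f x = deg x * f x - sum of
   f over the neighbours of x; first-step analysis bounds every partial sum of the
   series defining H(u,S) by h(u).  Let g be the Green function of u (g = 0 on S,
   L g = 1_u off S).  Since L is self-adjoint, h(u) = sum_{x notin S} g(x) deg(x), and
   by the maximum principle g <= g(u).  Moreover g(u) = sum_x g(x) (L g)(x) is the
   energy of g, i.e. the sum over edges of squared increments, so Cauchy-Schwarz
   along a shortest path from u to S gives g(u)^2 <= d(u,S) g(u), hence g(u) <= d(u,S)
   and H(u,S) <= d(u,S) sum_{v notin S} deg v.  The cubic bound is crude counting. *)

From HB Require Import structures.
From mathcomp Require Import all_boot all_order all_algebra.
From mathcomp Require Import all_classical all_reals all_analysis.
From mathcomp Require Import ring lra zify.
Set Implicit Arguments. Unset Strict Implicit. Unset Printing Implicit Defensive.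
Import Order.TTheory GRing.Theory Num.Theory.

Section Distance.
Variables (T : finType) (e : rel T).

Lemma walkb_last x p : path e x p -> walkb e (size p) x (last x p).
Proof.
elim: p x => [|y p IHp] x /=; first by rewrite eqxx.
by case/andP=> exy /IHp walk_y; apply/existsP; exists y; rewrite exy.
Qed.

Lemma descending_path (r : T -> nat) (A : pred T) :
    (forall x, ~~ A x -> exists2 y, e x y & r y < r x) ->
  forall u, exists n (p : nat -> T), [/\ n <= r u, p 0 = u, A (p n) &
    forall i, i < n -> e (p i) (p i.+1) && (r (p i.+1) < r (p i))].
Proof.
move=> desc u; have [k] := ubnP (r u); elim: k u => // k IHk u ltuk.
have [Au | nAu] := boolP (A u); first by exists 0, (fun=> u).
have [y exy ltyu] := desc u nAu.
have [n [p [le_n p0 Apn step_p]]] := IHk y (leq_trans ltyu ltuk).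
exists n.+1, (fun i => if i is i'.+1 then p i' else u); split => //.
  exact: leq_ltn_trans le_n ltyu.
by case=> [_|i /step_p //]; rewrite p0 exy ltyu.
Qed.

Hypothesis e_connected : connected_graph e.

Lemma has_walkb x v : has (fun n => walkb e n x v) (iota 0 #|T|).
Proof.
have /connectP[p p_path ->] := e_connected x v.
have [q q_path q_uniq _] := shortenP p_path.
apply/hasP; exists (size q); last exact: walkb_last.
by rewrite mem_iota /=; have := max_card (mem (x :: q)); rewrite (card_uniqP q_uniq).
Qed.

Lemma gdist_lt_card x v : gdist e x v < #|T|.
Proof. by rewrite -[ltnRHS](size_iota 0) -has_find has_walkb. Qed.

Lemma gdist_walkb x v : walkb e (gdist e x v) x v.
Proof. by have := nth_find 0 (has_walkb x v); rewrite nth_iota ?gdist_lt_card. Qed.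

Lemma gdist_min x v k : walkb e k x v -> gdist e x v <= k.
Proof.
move=> walk_k; rewrite leqNgt; apply/negP => lt_k.
have := before_find 0 lt_k; rewrite nth_iota ?add0n ?walk_k //.
exact: ltn_trans lt_k (gdist_lt_card x v).
Qed.

Variables (S : {set T}).
Hypothesis S_neq0 : S != finset.set0.

Local Notation rho x := (gdist_set e x S).

Lemma gdist_set_attained x : exists2 v, v \in S & rho x = gdist e x v.
Proof.
have [v0 v0S] := finset.set0Pn _ S_neq0.
rewrite /gdist_set -minEnat.
have gdist_le v : mem S v -> gdist e x v <= #|T| by move=> _; apply/ltnW/gdist_lt_card.
by have [v vS ->] := @eq_bigmin _ _ _ #|T| v0 (mem S) (gdist e x) v0S gdist_le; exists v.
Qed.

Lemma gdist_set_lt_card x : rho x < #|T|.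
Proof. by have [v _ ->] := gdist_set_attained x; apply: gdist_lt_card. Qed.

Lemma gdist_set_desc x : x \notin S -> exists2 y, e x y & rho y < rho x.
Proof.
move=> xS; have [v vS ->] := gdist_set_attained x.
have := gdist_walkb x v; case: (gdist e x v) => [/eqP xv | k].
  by move: xS; rewrite xv vS.
case/existsP=> y /andP[exy walk_y]; exists y => //.
rewrite ltnS; apply: leq_trans (gdist_min walk_y).
rewrite /gdist_set -minEnat.
exact: (@bigmin_le_cond _ _ _ #|T| v (mem S) (gdist e y) vS).
Qed.

End Distance.

Local Open Scope ring_scope.

Lemma ler_sum_inj (R : numDomainType) (I J : finType) (F : J -> R) (f : I -> J) :
  injective f -> (forall j, 0 <= F j) -> \sum_i F (f i) <= \sum_j F j.
Proof.
move=> f_inj F_ge0; rewrite -(big_imset _ (in2W f_inj)) /=.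
rewrite [leRHS](bigID (mem (f @: predT))) /= ler_wpDr //.
by apply: sumr_ge0 => j _; apply: F_ge0.
Qed.

Lemma sqr_sum_le (R : realFieldType) n (a : 'I_n -> R) :
  (\sum_i a i) ^+ 2 <= n%:R * \sum_i a i ^+ 2.
Proof.
case: n a => [|n] a; first by rewrite !big_ord0 expr0n mul0r.
set s := \sum_i a i; pose m := s / n.+1%:R.
have n_gt0 : 0 < n.+1%:R :> R by rewrite ltr0n.
have : 0 <= \sum_i (a i - m) ^+ 2 by apply: sumr_ge0 => i _; apply: sqr_ge0.
have -> : \sum_i (a i - m) ^+ 2 = \sum_i a i ^+ 2 - s ^+ 2 / n.+1%:R.
  rewrite (eq_bigr (fun i => a i ^+ 2 - (2 * m * a i - m ^+ 2))); last by move=> i _; ring.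
  rewrite sumrB big_split sumrN /= -mulr_sumr sumr_const card_ord -/s /m.
  by field; rewrite lt0r_neq0.
by rewrite subr_ge0 ler_pdivrMr // mulrC.
Qed.

Lemma mean_mul_le_cube (R : realFieldType) (m N s d : R) :
    1 <= m -> 0 <= s <= m * N -> 0 <= d <= m * N ->
  m^-1 * s * d <= N ^+ 2 * m ^+ 3.
Proof.
move=> m_ge1 /andP[s_ge0 s_le] /andP[d_ge0 d_le].
have m_gt0 : 0 < m by apply: lt_le_trans m_ge1.
have mean_s : m^-1 * s <= N by rewrite mulrC ler_pdivrMr // mulrC.
apply: le_trans (ler_pM _ d_ge0 mean_s d_le) _.
  by apply: mulr_ge0 => //; rewrite invr_ge0 ltW.
have N_ge0 : 0 <= N by rewrite -(pmulr_rge0 _ m_gt0); apply: le_trans s_le.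
rewrite !exprS expr0 !mulr1 mulrCA mulrC.
apply: ler_pM; [exact: mulr_ge0 | exact: ltW | by [] | nra].
Qed.

Lemma sum_nat_le_card (R : numDomainType) (T : finType) (A : {set T}) (F : T -> nat) n :
  (forall x, (F x <= n)%N) -> \sum_(x in A) (F x)%:R <= #|A|%:R * n%:R :> R.
Proof.
move=> le_n; rewrite mulr_natl -sumr_const.
by apply: ler_sum => x _; rewrite ler_nat.
Qed.

Section Laplacian.
Variables (R : realFieldType) (T : finType) (e : rel T).

Definition laplacian (f : T -> R) x := (deg e x)%:R * f x - \sum_y (e x y)%:R * f y.

Definition energy (f : T -> R) := \sum_x \sum_y (e x y)%:R * (f x - f y) ^+ 2.

Lemma sum_neighbours (F : T -> R) x :
  \sum_(y in [set w | e x w]) F y = \sum_y (e x y)%:R * F y.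
Proof.
rewrite big_mkcond; apply: eq_bigr => y _; rewrite inE.
by case: (e x y); rewrite ?mul1r ?mul0r.
Qed.

Lemma natr_deg x : (deg e x)%:R = \sum_y (e x y)%:R :> R.
Proof.
rewrite /deg -sum1_card natr_sum sum_neighbours.
by apply: eq_bigr => y _; rewrite mulr1.
Qed.

Lemma laplacianN f x : laplacian (fun y => - f y) x = - laplacian f x.
Proof.
rewrite /laplacian mulrN -sumrN opprB addrC; congr (_ - _).
by apply: eq_bigr => y _; rewrite mulrN opprK.
Qed.

Hypothesis e_sym : symmetric e.

Lemma sum_adj_swap (F : T -> T -> R) :
  \sum_x \sum_y (e x y)%:R * F x y = \sum_x \sum_y (e x y)%:R * F y x.
Proof.
rewrite exchange_big /=; apply: eq_bigr => x _; apply: eq_bigr => y _.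
by rewrite e_sym.
Qed.

Lemma sum_mul_laplacian (f k : T -> R) : \sum_x f x * laplacian k x =
  \sum_x \sum_y (e x y)%:R * (f x * k x) - \sum_x \sum_y (e x y)%:R * (f x * k y).
Proof.
rewrite -sumrB; apply: eq_bigr => x _.
rewrite /laplacian mulrBr natr_deg mulr_suml !mulr_sumr.
by congr (_ - _); apply: eq_bigr => y _; ring.
Qed.

Lemma laplacian_sym (f k : T -> R) :
  \sum_x f x * laplacian k x = \sum_x k x * laplacian f x.
Proof.
rewrite !sum_mul_laplacian (sum_adj_swap (fun x y => f x * k y)).
by congr (_ - _); apply: eq_bigr => x _; apply: eq_bigr => y _; ring.
Qed.

Lemma laplacian_energy (f : T -> R) : \sum_x f x * laplacian f x = energy f / 2.
Proof.
have -> : energy f = \sum_x \sum_y (e x y)%:R * (f x * f x)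
    + \sum_x \sum_y (e x y)%:R * (f y * f y)
    - 2 * \sum_x \sum_y (e x y)%:R * (f x * f y).
  rewrite mulr_sumr -!big_split -sumrB /=; apply: eq_bigr => x _.
  rewrite mulr_sumr -!big_split -sumrB /=; apply: eq_bigr => y _; ring.
by rewrite sum_mul_laplacian -(sum_adj_swap (fun x y => f x * f x)); field.
Qed.

Lemma oriented_energy_le (r : T -> nat) (f : T -> R) :
  2 * \sum_x \sum_y (e x y)%:R * (r y < r x)%N%:R * (f x - f y) ^+ 2 <= energy f.
Proof.
set D := \sum_x _; have -> : 2 * D = D + D by rewrite mulr2n mulrDl mul1r.
have {2}-> : D = \sum_x \sum_y (e x y)%:R * (r x < r y)%N%:R * (f x - f y) ^+ 2.
  rewrite /D; under eq_bigr do under eq_bigr do rewrite -mulrA.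
  rewrite sum_adj_swap; apply: eq_bigr => x _; apply: eq_bigr => y _.
  by rewrite -sqrrN opprB mulrA.
rewrite -big_split /=; apply: ler_sum => x _; rewrite -big_split /=.
apply: ler_sum => y _; rewrite -mulrDl -mulrDr ler_wpM2r ?sqr_ge0 //.
by rewrite -natrD -natrM ler_nat; case: (e x y) => /=; lia.
Qed.

Lemma sqr_sub_le_energy (r : T -> nat) (f : T -> R) (p : nat -> T) n :
  (forall i, (i < n)%N -> e (p i) (p i.+1) && (r (p i.+1) < r (p i))%N) ->
  (f (p 0%N) - f (p n)) ^+ 2 <= n%:R * (energy f / 2).
Proof.
move=> step_p.
(* The path only goes downhill in [r], so each of its edges is counted once when
   edges are oriented by [r]: this is what halves the energy. *)
pose down x := \sum_y (e x y)%:R * (r y < r x)%N%:R * (f x - f y) ^+ 2.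
have term_ge0 x y : 0 <= (e x y)%:R * (r y < r x)%N%:R * (f x - f y) ^+ 2.
  by rewrite mulr_ge0 ?sqr_ge0 // mulr_ge0.
have down_ge0 x : 0 <= down x by apply: sumr_ge0.
have step_down (i : 'I_n) : (f (p i) - f (p i.+1)) ^+ 2 <= down (p i).
  rewrite /down (bigD1 (p i.+1)) //=; case/andP: (step_p i (ltn_ord i)) => -> ->.
  by rewrite !mul1r ler_wpDr // sumr_ge0.
have p_inj : injective (fun i : 'I_n => p i).
  have r_dec : {in [pred i | (i <= n)%N] &, {homo r \o p : i j / (i < j)%N >-> (j < i)%N}}.
    apply: homo_ltn_in => [y x z /= ? ?|i j _ le_jn k|i _ ltin]; first lia.
      by rewrite !inE /= in le_jn * => /andP[_ /ltnW/leq_trans]; apply.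
    by case/andP: (step_p i ltin).
  have p_neq (i j : 'I_n) : (i < j)%N -> p i != p j.
    move=> lt_ij; have := r_dec i j (ltnW (ltn_ord i)) (ltnW (ltn_ord j)) lt_ij.
    by apply: contraTneq => /= ->; rewrite ltnn.
  move=> i j eq_p; apply/val_inj.
  by case: (ltngtP i j) => // /p_neq; rewrite eq_p eqxx.
have -> : f (p 0%N) - f (p n) = \sum_(i < n) (f (p i) - f (p i.+1)).
  rewrite -(big_mkord xpredT (fun i => f (p i) - f (p i.+1))).
  rewrite (@telescope_sumr_eq _ 0 n (fun i => - f (p i))) //.
    by rewrite opprK addrC.
  by move=> i _; rewrite opprK addrC.
apply: le_trans (sqr_sum_le _) _; rewrite ler_wpM2l //.
apply: le_trans (_ : _ <= \sum_(i < n) down (p i)) _; first exact: ler_sum.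
apply: le_trans (ler_sum_inj p_inj down_ge0) _.
by rewrite ler_pdivlMr // mulrC oriented_energy_le.
Qed.

End Laplacian.

Section Dirichlet.
Variables (R : realFieldType) (T : finType) (e : rel T).
Hypothesis e_connected : connected_graph e.

Lemma max_propagates (f : T -> R) m x :
    (forall y, f y <= m) -> f x = m ->
    (forall z, f z = m -> laplacian e f z <= 0) ->
  forall y, f y = m.
Proof.
move=> le_m fx_m lap_le0 y.
have nbr_max z w : f z = m -> e z w -> f w = m.
  move=> fz_m ezw.
  have term_ge0 v : xpredT v -> 0 <= (e z v)%:R * (m - f v).
    by move=> _; rewrite mulr_ge0 ?ler0n // subr_ge0.
  have sum_eq0 : \sum_v (e z v)%:R * (m - f v) = 0.
    apply/eqP; rewrite eq_le sumr_ge0 // andbT.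
    have := lap_le0 z fz_m; rewrite /laplacian natr_deg fz_m mulr_suml -sumrB.
    by under eq_bigr do rewrite -mulrBr.
  have := psumr_eq0P term_ge0 sum_eq0 isT (i := w).
  by rewrite ezw mul1r => /eqP; rewrite subr_eq0 => /eqP.
have /connectP[q q_path ->] := e_connected x y.
elim: q x fx_m q_path => [|w q IHq] x fx_m //= /andP[exw w_q].
exact: IHq (nbr_max _ _ fx_m exw) w_q.
Qed.

Lemma max_principle (f : T -> R) (A : pred T) c a : A a ->
    (forall z, A z -> f z <= c) -> (forall z, ~~ A z -> laplacian e f z <= 0) ->
  forall y, f y <= c.
Proof.
move=> Aa le_A lap_le0.
case: (@arg_maxP _ R T a xpredT f isT) => x _ max_x.
have [fx_le y | lt_fx] := lerP (f x) c; first exact: le_trans (max_x y isT) fx_le.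
suff fa_x : f a = f x by have := le_A a Aa; rewrite fa_x leNgt lt_fx.
apply: (max_propagates (fun y => max_x y isT) erefl _ a) => z fz_x.
by apply: lap_le0; apply/negP => /le_A; rewrite fz_x leNgt lt_fx.
Qed.

Variables (S : {set T}).
Hypothesis S_neq0 : S != finset.set0.

Definition solves_dirichlet (b f : T -> R) :=
  (forall x, x \in S -> f x = 0) /\ (forall x, x \notin S -> laplacian e f x = b x).

Lemma dirichlet_ge0 (b f : T -> R) : (forall x, 0 <= b x) -> solves_dirichlet b f ->
  forall y, 0 <= f y.
Proof.
move=> b_ge0 [f_S lap_f] y; rewrite -oppr_le0.
have [s sS] := finset.set0Pn _ S_neq0.
apply: (@max_principle (fun x => - f x) (mem S) 0 s) => // [z zS | z zS].
  by rewrite f_S // oppr0.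
by rewrite laplacianN lap_f // oppr_le0.
Qed.

Lemma dirichlet_eq0 (f : T -> R) : solves_dirichlet (fun=> 0) f -> forall y, f y = 0.
Proof.
move=> f_sol y; apply/eqP; rewrite eq_le (dirichlet_ge0 (fun=> lexx 0) f_sol) andbT.
have [f_S lap_f] := f_sol; rewrite -oppr_ge0.
apply: (@dirichlet_ge0 (fun=> 0) (fun x => - f x)) => //; split => x.
  by move=> /f_S ->; rewrite oppr0.
by move=> /lap_f; rewrite laplacianN => ->; rewrite oppr0.
Qed.

Lemma dirichlet_exists (b : T -> R) : exists f, solves_dirichlet b f.
Proof.
pose coef x y : R :=
  if x \in S then (x == y)%:R else (deg e x)%:R * (x == y)%:R - (e x y)%:R.
have sum_coef (f : T -> R) x :
    \sum_y f y * coef x y = if x \in S then f x else laplacian e f x.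
  have sum_delta : \sum_y f y * (x == y)%:R = f x.
    rewrite (bigD1 x) //= eqxx mulr1 big1 ?addr0 // => y.
    by rewrite eq_sym => /negbTE ->; rewrite mulr0.
  rewrite /coef; case: ifP => _ //; rewrite /laplacian -sum_delta mulr_sumr -sumrB.
  by apply: eq_bigr => y _; ring.
(* [A] is the matrix of [f |-> (f on S, laplacian off S)], injective by [dirichlet_eq0]. *)
pose A : 'M[R]_#|T| := \matrix_(i, j) coef (enum_val j) (enum_val i).
have mulA (v : 'rV[R]_#|T|) x :
    (v *m A) 0 (enum_rank x) = \sum_y v 0 (enum_rank y) * coef x y.
  rewrite mxE (big_enum_val (A := T)) /=; apply: eq_bigr => j _.
  by rewrite mxE enum_rankK enum_valK.
pose rhs : 'rV[R]_#|T| := \row_i (if enum_val i \in S then 0 else b (enum_val i)).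
suff unitA : A \in unitmx.
  pose v := rhs *m invmx A; exists (fun y => v 0 (enum_rank y)).
  have vA : v *m A = rhs by rewrite mulmxKV.
  split=> x x_S; have := mulA v x;
    by rewrite vA sum_coef mxE enum_rankK ?x_S ?(negbTE x_S) => <-.
rewrite unitmxE unitfE; apply/negP => /det0P[v v_neq0 vA0].
have v0 : forall y, v 0 (enum_rank y) = 0.
  apply: dirichlet_eq0; split => x x_S; have := mulA v x;
    by rewrite vA0 mxE sum_coef ?x_S ?(negbTE x_S).
move/negP: v_neq0; apply; apply/eqP/rowP => j; rewrite mxE.
by have := v0 (enum_val j); rewrite enum_valK.
Qed.

End Dirichlet.

Section HittingPotential.
Variables (R : realFieldType) (T : finType) (e : rel T).
Hypotheses (e_sym : symmetric e) (e_connected : connected_graph e).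
Variables (S : {set T}).
Hypothesis S_neq0 : S != finset.set0.

Lemma sum_mul_green (g k : T -> R) u :
    solves_dirichlet e S (fun x => (x == u)%:R) g -> (forall x, x \in S -> k x = 0) ->
  \sum_x k x * laplacian e g x = k u.
Proof.
move=> [_ lap_g] k_S; rewrite (bigD1 u) //= big1 ?addr0 => [|x xu].
  have [uS | uS] := boolP (u \in S); first by rewrite k_S ?mul0r.
  by rewrite lap_g // eqxx mulr1.
have [xS | xS] := boolP (x \in S); first by rewrite k_S ?mul0r.
by rewrite lap_g // (negbTE xu) mulr0.
Qed.

Lemma green_le_gdist_set (g : T -> R) u : u \notin S ->
    solves_dirichlet e S (fun x => (x == u)%:R) g ->
  (forall w, g w <= g u) /\ g u <= (gdist_set e u S)%:R.
Proof.
move=> uS g_sol; have [g_S lap_g] := g_sol.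
have g_ge0 := dirichlet_ge0 e_connected S_neq0 (fun x => ler0n R (x == u)) g_sol.
split.
  have [s sS] := finset.set0Pn _ S_neq0.
  apply: (max_principle e_connected (A := [predU S & pred1 u]) (a := s)).
  - by rewrite inE sS.
  - by move=> z /orP[/g_S -> // | /eqP ->].
  - by move=> z; rewrite !inE negb_or => /andP[zS /negbTE zu]; rewrite lap_g // zu.
have gu_energy : g u = energy e g / 2.
  by rewrite -laplacian_energy // (sum_mul_green g_sol g_S).
have [n [p [le_n p0 pnS step_p]]] :=
  descending_path (gdist_set_desc e_connected S_neq0) u.
have := @sqr_sub_le_energy _ _ _ e_sym (gdist_set e ^~ S) g _ _ step_p.
rewrite p0 (g_S _ pnS) subr0 -gu_energy.
have [gu_le0 _ | gu_gt0] := lerP (g u) 0; first exact: le_trans gu_le0 (ler0n _ _).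
by rewrite expr2 ler_pM2r // => /le_trans; apply; rewrite ler_nat.
Qed.

Lemma hitting_potential_le (h : T -> R) u : u \notin S ->
    solves_dirichlet e S (fun x => (deg e x)%:R) h ->
  h u <= (gdist_set e u S)%:R * \sum_(v in ~: S) (deg e v)%:R.
Proof.
move=> uS [h_S lap_h].
have [g g_sol] := dirichlet_exists e_connected S_neq0 (fun x => (x == u)%:R : R).
have [g_max g_le] := green_le_gdist_set uS g_sol.
have [g_S _] := g_sol.
have -> : h u = \sum_(x in ~: S) g x * (deg e x)%:R.
  rewrite -(sum_mul_green g_sol h_S) laplacian_sym // (bigID (mem S)) /=.
  rewrite big1 ?add0r => [|x /g_S ->]; last by rewrite mul0r.
  by apply: eq_big => [x | x xS]; rewrite ?inE // lap_h.
rewrite mulr_sumr; apply: ler_sum => x _.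
by rewrite ler_wpM2r ?ler0n //; apply: le_trans (g_max x) g_le.
Qed.

End HittingPotential.

Lemma nneseries_le_ub (R : realType) (a : nat -> R) (l : R) :
    (forall t, 0 <= a t) -> (forall N, \sum_(0 <= t < N) a t <= l) ->
  (\sum_(0 <= t <oo) (a t)%:E <= l%:E)%E.
Proof.
move=> a_ge0 le_l.
have a_ge0E n : (0 <= n)%N -> xpredT n -> (0 <= (a n)%:E)%E by rewrite lee_fin.
apply: (lime_le (is_cvg_nneseries a_ge0E)); apply: nearW => N.
by rewrite sumEFin lee_fin.
Qed.

Section RandomWalk.
Variables (R : realType) (T : finType) (e : rel T).
Hypothesis e_connected : connected_graph e.
Variables (S : {set T}).
Hypothesis S_neq0 : S != finset.set0.

Local Notation P := (hitP R e S).

Lemma deg_gt0 x : x \notin S -> (0 < deg e x)%N.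
Proof.
move=> xS; have [s sS] := finset.set0Pn _ S_neq0.
have /connectP[[|y q] /= q_path xs] := e_connected x s.
  by move: xS; rewrite -xs sS.
by case/andP: q_path => exy _; apply/card_gt0P; exists y; rewrite inE.
Qed.

Lemma hitP_ge0 t x : 0 <= P t x.
Proof.
elim: t x => [|t IHt] x /=; case: ifP => // _.
by apply: sumr_ge0 => y _; rewrite divr_ge0.
Qed.

Lemma sum_hitP_le1 N x : \sum_(0 <= t < N) P t x <= 1.
Proof.
elim: N x => [|N IHN] x; first by rewrite big_nil.
rewrite big_nat_recl //=; case: ifP => xS.
  by rewrite big1 ?addr0.
have deg_pos : 0 < (deg e x)%:R :> R by rewrite ltr0n deg_gt0 ?xS.
rewrite add0r; under eq_bigr do rewrite -mulr_suml.
rewrite -mulr_suml exchange_big /= ler_pdivrMr // mul1r.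
apply: le_trans (_ : _ <= \sum_(y in [set w | e x w]) (1 : R)) _.
  by apply: ler_sum => y _; apply: IHN.
by rewrite sumr_const.
Qed.

Lemma hitting_time_le (h : T -> R) u :
  solves_dirichlet e S (fun x => (deg e x)%:R) h -> (hitting_time R e u S <= (h u)%:E)%E.
Proof.
move=> h_sol; have [h_S lap_h] := h_sol.
have h_ge0 := dirichlet_ge0 e_connected S_neq0 (fun x => ler0n R (deg e x)) h_sol.
apply: nneseries_le_ub => [t | N]; first by rewrite mulr_ge0 ?hitP_ge0.
elim: N u => [|N IHN] x; first by rewrite big_nil h_ge0.
rewrite big_nat_recl // mul0r add0r /=.
have [xS | xS] := boolP (x \in S); first by rewrite big1 // => t _; rewrite mulr0.
have deg_pos : 0 < (deg e x)%:R :> R by rewrite ltr0n deg_gt0.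
have h_mean : h x * (deg e x)%:R = \sum_(y in [set w | e x w]) (h y + 1).
  have := lap_h x xS; rewrite /laplacian -sum_neighbours big_split /= sumr_const.
  by rewrite mulrC => /eqP; rewrite subr_eq addrC => /eqP ->.
have -> : \sum_(0 <= i < N) i.+1%:R * \sum_(y in [set w | e x w]) P i y / (deg e x)%:R
    = (\sum_(y in [set w | e x w]) \sum_(0 <= i < N) i.+1%:R * P i y) / (deg e x)%:R.
  rewrite [RHS]mulr_suml; under [RHS]eq_bigr do rewrite mulr_suml.
  rewrite [RHS]exchange_big /=; apply: eq_bigr => i _.
  by rewrite mulr_sumr; apply: eq_bigr => y _; rewrite mulrA.
rewrite ler_pdivrMr // h_mean; apply: ler_sum => y _.
rewrite (eq_bigr (fun i => i%:R * P i y + P i y)) => [|i _].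
  by rewrite big_split lerD ?IHN ?sum_hitP_le1.
by rewrite -natr1 mulrDl mul1r.
Qed.

End RandomWalk.

Lemma avg_hitting_time_le (R : realType) (T : finType) (e : rel T) (S : {set T}) :
    symmetric e -> connected_graph e -> S != finset.set0 ->
  (avg_hitting_time R e S <= ((#|~: S|%:R)^-1 * (\sum_(u in ~: S) (gdist_set e u S)%:R)
     * (\sum_(v in ~: S) (deg e v)%:R))%:E)%E.
Proof.
move=> e_sym e_connected S_neq0.
have [h h_sol] := dirichlet_exists e_connected S_neq0 (fun x => (deg e x)%:R : R).
rewrite /avg_hitting_time -mulrA [_^-1 * _]mulrC EFinM.
apply: lee_wpmul2r; first by rewrite lee_fin invr_ge0.
apply: (@le_trans _ _ (\sum_(u in ~: S) (h u)%:E)%E).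
  by apply: lee_sum => u _; apply: hitting_time_le.
rewrite sumEFin lee_fin mulr_suml; apply: ler_sum => u; rewrite inE => uS.
exact: hitting_potential_le.
Qed.

Theorem proposition2 (R : realType) (T : finType) (e : rel T)
  (Hsimple : simple_graph e) (Hconn : connected_graph e) :
  exists c : R, 0 < c /\
    forall S : {set T}, S != finset.set0 -> S != finset.setT ->
      let B := (#|~: S|%:R)^-1 *
               (\sum_(u in ~: S) (gdist_set e u S)%:R) *
               (\sum_(v in ~: S) (deg e v)%:R) in
      (avg_hitting_time R e S <= B%:E)%E /\ B <= c * (#|~: S|%:R) ^+ 3.
Proof.
have [e_sym _] := Hsimple.
exists (#|T|.+1%:R ^+ 2); split => [|S S_neq0 S_neqT B]; first by rewrite exprn_gt0.
split; first exact: avg_hitting_time_le.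
have setC_ge1 : 1 <= #|~: S|%:R :> R.
  rewrite ler1n lt0n finset.cards_eq0; apply: contra S_neqT => /eqP SC0.
  by rewrite -[S]finset.setCK SC0 finset.setC0.
apply: mean_mul_le_cube; rewrite // ?sumr_ge0 //= sum_nat_le_card // => x.
  by rewrite ltnW // ltnS ltnW // (gdist_set_lt_card Hconn S_neq0).
by rewrite ltnW // ltnS max_card.
Qed.
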